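(* Let $\varphi$ be an automorphism of $E$ of type 4, let $\{e_n\}_{n\in\mathbb{N}}$ be a basis of $L$, and write $\varphi(e_n)=-e_n+2a_n$ with $a_n=(e_n+\varphi(e_n))/2$. Then the family $\{a_n\mid n\in\mathbb{N}\}$ is linearly independent over $F$.
   Context: $F$ is a field of characteristic zero, $L$ an infinite-dimensional $F$-vector space, $E$ the Grassmann algebra of $L$. An automorphism $\varphi$ of $E$ with $\varphi^2=\mathrm{id}$ is of type 4 if for every basis $\gamma$ of $L$ no element $v\in\gamma$ satisfies $\varphi(v)=\pm v$. *)

From HB Require Import structures.
From mathcomp Require Import all_boot all_order all_algebra.
Set Implicit Arguments. Unset Strict Implicit. Unset Printing Implicit Defensive.
Import GRing.Theory.
Local Open Scope ring_scope.

(* Model of the Grassmann algebra E of a vector space L with basis (g n)_{n in nat}: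
   E is a unital associative F-algebra, the g n anticommute and square to 0, and the
   ordered monomials g_{i1} ... g_{ik} (i1 < ... < ik, k >= 0) form an F-basis of E.
   This characterizes E = E(L) up to isomorphism, with L = span {g n}. *)

Section Grassmann.
Variables (F : fieldType) (E : algType F).

Definition monomial (g : nat -> E) (s : seq nat) : E := \prod_(i <- s) g i.

Definition is_grassmann (g : nat -> E) : Prop :=
  [/\ (forall i j, g i * g j = - (g j * g i)),
      (forall i, g i * g i = 0),
      (forall (S : seq (seq nat)) (c : seq nat -> F),
          uniq S -> all (sorted ltn) S ->
          \sum_(s <- S) c s *: monomial g s = 0 -> forall s, s \in S -> c s = 0)
    & (forall x : E, exists (S : seq (seq nat)) (c : seq nat -> F),
          all (sorted ltn) S /\ x = \sum_(s <- S) c s *: monomial g s)].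

Definition inL (g : nat -> E) (v : E) : Prop :=
  exists (s : seq nat) (c : nat -> F), v = \sum_(i <- s) c i *: g i.

Definition family_free (f : nat -> E) : Prop :=
  forall (s : seq nat) (c : nat -> F), uniq s ->
    \sum_(i <- s) c i *: f i = 0 -> forall i, i \in s -> c i = 0.

Definition is_basis_family_of_L (g : nat -> E) (e : nat -> E) : Prop :=
  [/\ forall n, inL g (e n),
      family_free e
    & forall v, inL g v -> exists (s : seq nat) (c : nat -> F), v = \sum_(i <- s) c i *: e i].

Definition is_basis_set_of_L (g : nat -> E) (gamma : E -> Prop) : Prop :=
  [/\ forall v, gamma v -> inL g v,
      (forall (s : seq E) (c : E -> F), uniq s -> (forall v, v \in s -> gamma v) ->
          \sum_(v <- s) c v *: v = 0 -> forall v, v \in s -> c v = 0)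
    & forall v, inL g v -> exists (s : seq E) (c : E -> F),
          (forall w, w \in s -> gamma w) /\ v = \sum_(w <- s) c w *: w].

Definition is_alg_automorphism (phi : E -> E) : Prop :=
  [/\ (forall (a : F) (x y : E), phi (a *: x + y) = a *: phi x + phi y),
      (forall x y, phi (x * y) = phi x * phi y),
      phi 1 = 1
    & bijective phi].

Definition type4 (g : nat -> E) (phi : E -> E) : Prop :=
  forall gamma : E -> Prop, is_basis_set_of_L g gamma ->
    forall v, gamma v -> phi v <> v /\ phi v <> - v.

End Grassmann.

(* If [sum_n d_n a_n = 0] with some [d_m <> 0], then [v := sum_n d_n e_n] satisfies
   [phi v = -v] (this uses [2 <> 0] in [F]).  Since [e_m] occurs in [v] with a nonzero
   coefficient, replacing [e_m] by [v] gives another basis of [L], which contains an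
   element anti-fixed by [phi]: this contradicts type 4. *)

From mathcomp Require Import all_boot all_algebra.
Import GRing.Theory.
Local Open Scope ring_scope.

Set Implicit Arguments.
Unset Strict Implicit.

Section Span.
Variables (R : pzRingType) (V : lmodType R).

Definition in_span (I : Type) (h : I -> V) (w : V) : Prop :=
  exists (s : seq I) (c : I -> R), w = \sum_(i <- s) c i *: h i.

Lemma in_span0 (I : Type) (h : I -> V) : in_span h 0.
Proof. by exists [::], (fun _ => 0); rewrite big_nil. Qed.

Lemma in_spanZ (I : Type) (h : I -> V) a w : in_span h w -> in_span h (a *: w).
Proof.
case=> s [c ->]; exists s, (fun i => a * c i).
by rewrite scaler_sumr; apply: eq_bigr => i _; rewrite scalerA.
Qed.

Lemma in_span_gen (I : Type) (h : I -> V) i : in_span h (h i).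
Proof. by exists [:: i], (fun _ => 1); rewrite big_seq1 scale1r. Qed.

Section EqIndex.
Variables (I : eqType) (h : I -> V).

Lemma in_span_uniq w : in_span h w ->
  exists (s : seq I) (c : I -> R), uniq s /\ w = \sum_(i <- s) c i *: h i.
Proof.
case=> s [c ->]; exists (undup s), (fun i => c i *+ count_mem i s).
split; first exact: undup_uniq.
rewrite -big_undup_iterop_count; apply: eq_bigr => i _.
by rewrite Monoid.iteropE iter_addr_0 scalerMnl.
Qed.

Lemma sum_extend (s u : seq I) (c : I -> R) : uniq s -> uniq u -> {subset s <= u} ->
  \sum_(i <- s) c i *: h i = \sum_(i <- u) (if i \in s then c i else 0) *: h i.
Proof.
move=> us uu sub_su.
under [RHS]eq_bigr do rewrite (fun_if (fun a => a *: h _)) scale0r.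
rewrite -big_mkcond -big_filter; apply: perm_big; apply: uniq_perm => //.
  exact: filter_uniq.
by move=> i; rewrite mem_filter; case: (boolP (i \in s)) => // /sub_su ->.
Qed.

Lemma in_spanD x y : in_span h x -> in_span h y -> in_span h (x + y).
Proof.
move=> /in_span_uniq [s1 [c1 [us1 ->]]] /in_span_uniq [s2 [c2 [us2 ->]]].
pose u := undup (s1 ++ s2).
exists u, (fun i => (if i \in s1 then c1 i else 0) + (if i \in s2 then c2 i else 0)).
rewrite (sum_extend (u := u)) ?(sum_extend (s := s2) (u := u)) ?undup_uniq //.
- by rewrite -big_split; apply: eq_bigr => i _; rewrite scalerDl.
- by move=> i i_s2; rewrite mem_undup mem_cat i_s2 orbT.
- by move=> i i_s1; rewrite mem_undup mem_cat i_s1.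
Qed.

Lemma in_span_trans (J : Type) (k : J -> V) w :
  (forall j, in_span h (k j)) -> in_span k w -> in_span h w.
Proof.
move=> hk [s [c ->]]; elim: s => [|j s IHs]; rewrite ?big_nil ?big_cons.
  exact: in_span0.
by apply: in_spanD => //; apply: in_spanZ.
Qed.

End EqIndex.

Lemma linear_comb (W : lmodType R) (I : Type) (phi : V -> W)
    (phi_lin : forall a x y, phi (a *: x + y) = a *: phi x + phi y)
    (s : seq I) (c : I -> R) (x : I -> V) :
  phi (\sum_(i <- s) c i *: x i) = \sum_(i <- s) c i *: phi (x i).
Proof.
have phi0 : phi 0 = 0.
  have := phi_lin 1 0 0; rewrite !scale1r addr0 => phi00.
  by apply: (@addrI _ (phi 0)); rewrite addr0 -phi00.
elim: s => [|i s IHs]; rewrite ?big_nil ?big_cons //.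
by rewrite phi_lin IHs.
Qed.

End Span.

Section Basis.
Variables (F : fieldType) (E : algType F).
Implicit Types (e : nat -> E) (s t : seq nat) (c d : nat -> F).

Lemma family_free_coef_eq e s1 s2 c1 c2 : family_free e -> uniq s1 -> uniq s2 ->
  \sum_(i <- s1) c1 i *: e i = \sum_(i <- s2) c2 i *: e i ->
  forall i, (if i \in s1 then c1 i else 0) = (if i \in s2 then c2 i else 0).
Proof.
move=> free_e us1 us2 eq12 i; pose u := undup (s1 ++ s2).
have uu : uniq u by exact: undup_uniq.
have s1u : {subset s1 <= u} by move=> j j_s1; rewrite mem_undup mem_cat j_s1.
have s2u : {subset s2 <= u} by move=> j j_s2; rewrite mem_undup mem_cat j_s2 orbT.
have [i_u | ] := boolP (i \in u); last first.
  by rewrite mem_undup mem_cat negb_or => /andP[/negbTE-> /negbTE->].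
apply/eqP; rewrite -subr_eq0; apply/eqP.
apply: (free_e u (fun j => (if j \in s1 then c1 j else 0) - (if j \in s2 then c2 j else 0)))
  i_u => //.
under eq_bigr do rewrite scalerBl.
by rewrite sumrB -(sum_extend e c1 us1 uu s1u) -(sum_extend e c2 us2 uu s2u) eq12 subrr.
Qed.

Lemma family_free_inj e : family_free e -> injective e.
Proof.
move=> free_e m n e_mn; apply/eqP; apply: contraT => neq_mn.
have uniq_mn : uniq [:: m; n] by rewrite /= inE neq_mn.
have sum0 : \sum_(i <- [:: m; n]) (if i == m then 1 else -1) *: e i = 0.
  by rewrite !big_cons big_nil eqxx eq_sym (negbTE neq_mn) scale1r scaleN1r e_mn addr0 subrr.
have := free_e _ _ uniq_mn sum0 m (mem_head _ _).
by rewrite eqxx => /eqP; rewrite oner_eq0.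
Qed.

Lemma basis_family_range g e : is_basis_family_of_L g e ->
  is_basis_set_of_L g (fun w => exists n, w = e n).
Proof.
case=> e_L free_e span_e; have inj_e := family_free_inj free_e.
split; first by move=> _ [n ->].
- move=> s c us s_e sum0.
  have [t def_s] : exists t, s = map e t.
    elim: s s_e {us sum0} => [|w s IHs] s_e; first by exists [::].
    have [n ->] := s_e w (mem_head _ _).
    have [t ->] : exists t, s = map e t.
      by apply: IHs => v v_s; apply: s_e; rewrite inE v_s orbT.
    by exists (n :: t).
  subst s => _ /mapP[i i_t ->].
  rewrite map_inj_uniq // in us; rewrite big_map in sum0.
  exact: (free_e t (c \o e) us sum0).
- move=> w /span_e /in_span_uniq [t [d [ut ->]]].
  exists (map e t), (fun w => \sum_(i <- t | e i == w) d i); split.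
    by move=> _ /mapP[i _ ->]; exists i.
  rewrite big_map; apply: eq_big_seq => i i_t; congr (_ *: _).
  rewrite (eq_bigl (pred1 i)) => [|j]; last by rewrite /= (inj_eq inj_e).
  by rewrite -big_filter filter_pred1_uniq // big_seq1.
Qed.

Definition exchange (e : nat -> E) i0 (w : E) n := if n == i0 then w else e n.

Section Exchange.
Variables (e : nat -> E) (t : seq nat) (d : nat -> F) (i0 : nat).
Hypotheses (ut : uniq t) (i0_t : i0 \in t) (d0 : d i0 != 0).
Let v := \sum_(i <- t) d i *: e i.

Lemma in_span_exchange i : in_span (exchange e i0 v) (e i).
Proof.
have [->|ne_i] := eqVneq i i0; last first.
  have -> : e i = exchange e i0 v i by rewrite /exchange (negbTE ne_i).
  exact: in_span_gen.
have v_split : v = d i0 *: e i0 + \sum_(j <- t | j != i0) d j *: exchange e i0 v j.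
  rewrite {1}/v (bigD1_seq i0) //=; congr (_ + _).
  by apply: eq_bigr => j /negbTE ne_j; rewrite /exchange ne_j.
have -> : e i0 =
    (d i0)^-1 *: (exchange e i0 v i0 - \sum_(j <- t | j != i0) d j *: exchange e i0 v j).
  by rewrite {1}/exchange eqxx {1}v_split addrK scalerA mulVf // scale1r.
apply/in_spanZ/in_spanD; first exact: in_span_gen.
by rewrite -scaleN1r; apply: in_spanZ; exists [seq j <- t | j != i0], d; rewrite big_filter.
Qed.

Lemma family_free_exchange : family_free e -> family_free (exchange e i0 v).
Proof.
move=> free_e s c us sum0; pose s' := [seq i <- s | i != i0].
have us' : uniq s' by exact: filter_uniq.
pose k := \sum_(i <- s | i == i0) c i.
have split_sum : \sum_(i <- s) c i *: exchange e i0 v i = k *: v + \sum_(i <- s') c i *: e i.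
  rewrite (bigID (pred1 i0)) /= scaler_suml big_filter; congr (_ + _).
    by apply: eq_bigr => i /eqP ->; rewrite /exchange eqxx.
  by apply: eq_bigr => i /negbTE ne_i; rewrite /exchange ne_i.
have k0 : k = 0.
  have : \sum_(i <- t) (k * d i) *: e i = \sum_(i <- s') (- c i) *: e i.
    under eq_bigr do rewrite -scalerA.
    under [RHS]eq_bigr do rewrite scaleNr.
    by rewrite -scaler_sumr sumrN; apply/eqP; rewrite -addr_eq0 -split_sum sum0.
  move/(family_free_coef_eq free_e ut us')/(_ i0).
  by rewrite i0_t mem_filter eqxx /= => /eqP; rewrite mulf_eq0 (negbTE d0) orbF => /eqP.
move: sum0; rewrite split_sum k0 scale0r add0r => sum0 i i_s.
have [eq_i|ne_i] := eqVneq i i0.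
  by rewrite -k0 /k -big_filter eq_i filter_pred1_uniq -?eq_i // big_seq1.
by apply: (free_e _ _ us' sum0); rewrite mem_filter ne_i.
Qed.

Lemma basis_family_exchange g : is_basis_family_of_L g e ->
  is_basis_family_of_L g (exchange e i0 v).
Proof.
case=> e_L free_e span_e; split.
- move=> n; rewrite /exchange; case: eqP => // _.
  by apply: in_span_trans e_L _; exists t, d.
- exact: family_free_exchange.
- by move=> w /span_e; apply: in_span_trans; exact: in_span_exchange.
Qed.

End Exchange.

End Basis.

Theorem mainTheorem12 (F : fieldType) (hF : [pchar F] =i pred0)
  (E : algType F) (g : nat -> E) (hE : is_grassmann g)
  (phi : E -> E) (hphi : is_alg_automorphism phi)
  (hinv : forall x, phi (phi x) = x) (h4 : type4 g phi)
  (e : nat -> E) (he : is_basis_family_of_L g e) :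
  family_free (fun n => (2%:R : F)^-1 *: (e n + phi (e n))).
Proof.
move=> t d ut sum0 i0 i0_t; apply/eqP; apply: contraT => d0.
have [phi_lin _ _ _] := hphi.
have two_neq0 : (2%:R : F) != 0 by rewrite (pcharf0P F).1.
pose v := \sum_(i <- t) d i *: e i.
have phi_v : phi v = - v.
  have : (2%:R : F)^-1 *: (v + phi v) = 0.
    rewrite -sum0 /v (linear_comb phi_lin) -big_split scaler_sumr /=.
    by apply: eq_bigr => i _; rewrite -scalerDr !scalerA mulrC.
  by move/eqP; rewrite scaler_eq0 invr_eq0 (negbTE two_neq0) addrC addr_eq0 => /eqP.
have basis_v := basis_family_range (basis_family_exchange ut i0_t d0 he).
have [|_ []//] := h4 _ basis_v v.
by exists i0; rewrite /exchange eqxx.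
Qed.
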